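(* Let $d,r:\mathbb{N}\to\mathbb{N}$ be functions such that $d$ is nondecreasing, takes only odd values at least $5$, and $d(n)\ge2r(n)+1$ for all $n$. Let $\alpha_n=(1\;2\;\cdots\;d(n))$, $\beta_n=(1\;(1+r(n))\;(1+2r(n)))\in\mathrm{Alt}(d(n))$, let $\alpha=(\alpha_n)_n,\beta=(\beta_n)_n\in\prod_n\mathrm{Alt}(d(n))$, $G=\langle\alpha,\beta\rangle$, let $\pi_n:\prod_k\mathrm{Alt}(d(k))\to\mathrm{Alt}(d(n))$ be the projection, and for $m\ge0$ let $L_m=\langle\alpha^j\beta\alpha^{-j}:|j|\le m\rangle\le G$. If $n$ is such that $\langle\alpha_n,\beta_n\rangle=\mathrm{Alt}(d(n))$, then $\pi_n(L_m)=\mathrm{Alt}(d(n))$ for all $m\ge d(n)\log d(n)/\log 2$.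
   Context: $\mathbb{N}=\{1,2,3,\dots\}$. *)

From Stdlib Require Import Rdefinitions Raxioms Rfunctions Rpower Lia.
From HB Require Import structures.
From mathcomp Require Import all_boot all_order all_algebra all_fingroup all_solvable.
From mathcomp Require Import zify.
Set Implicit Arguments. Unset Strict Implicit. Unset Printing Implicit Defensive.

(* Points 1..d of the paper are the ordinals 0..d-1 of 'I_d. *)

Definition alpha_perm (k : nat) : {perm 'I_k} := perm (@ordS_inj k).

Definition cyc3 (r i : nat) : nat :=
  if i == 0 then r else if i == r then (2 * r)%N
  else if i == (2 * r)%N then 0 else i.

Lemma cyc3K3 r : 0 < r -> forall i, cyc3 r (cyc3 r (cyc3 r i)) = i.
Proof.
move=> r0 i; rewrite /cyc3.
have r2 : (2 * r == r) = false by apply/eqP; lia.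
have r20 : (2 * r == 0) = false by apply/eqP; lia.
have rn0 : (r == 0) = false by apply/eqP; lia.
case: (eqVneq i 0) => [->|i0]; first by rewrite ?eqxx ?rn0 ?r20 ?r2 ?eqxx.
case: (eqVneq i r) => [->|ir]; first by rewrite ?eqxx ?rn0 ?r20 ?r2 ?eqxx.
case: (eqVneq i (2*r)) => [->|i2]; first by rewrite ?eqxx ?rn0 ?r20 ?r2 ?eqxx.
by rewrite !(negbTE i0, negbTE ir, negbTE i2).
Qed.

Definition beta_fun (k r : nat) (i : 'I_k) : 'I_k :=
  if (0 < r) && (2 * r < k) then insubd i (cyc3 r i) else i.

Lemma beta_fun_inj k r : injective (@beta_fun k r).
Proof.
move=> i j; rewrite /beta_fun; case: ifP => [/andP [r0 rk]|_] //.
have lt : forall x : 'I_k, cyc3 r x < k.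
  move=> x; rewrite /cyc3; case: ifP => _; first lia.
  case: ifP => _; first lia. case: ifP => _; first lia. exact: ltn_ord.
move/(congr1 val); rewrite !val_insubd !lt => e.
apply: val_inj => /=; by rewrite -(cyc3K3 r0 (val i)) e cyc3K3.
Qed.

Definition beta_perm (k r : nat) : {perm 'I_k} := perm (@beta_fun_inj k r).

Section Product.
Variable d : nat -> nat.

(* the full product  prod_n Sym(d n)  (which contains prod_n Alt(d n)),
   with pointwise group operations *)
Definition Prod := forall n, {perm 'I_(d n)}.
Definition pone : Prod := fun n => 1%g.
Definition pmul (x y : Prod) : Prod := fun n => (x n * y n)%g.
Definition pinv (x : Prod) : Prod := fun n => (x n)^-1%g.
Definition pexpn (x : Prod) (k : nat) : Prod := iter k (pmul x) pone.
Definition zpow (x : Prod) (j : int) : Prod :=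
  match j with Posz k => pexpn x k | Negz k => pinv (pexpn x k.+1) end.

Definition is_subgroup (H : Prod -> Prop) : Prop :=
  [/\ H pone, (forall x y, H x -> H y -> H (pmul x y)) & (forall x, H x -> H (pinv x))].

Definition gen (S : Prod -> Prop) : Prod -> Prop :=
  fun x => forall H, is_subgroup H -> (forall y, S y -> H y) -> H x.
End Product.

Definition alpha (d : nat -> nat) : Prod d := fun n => alpha_perm (d n).
Definition beta (d r : nat -> nat) : Prod d := fun n => beta_perm (d n) (r n).

Definition Lm (d r : nat -> nat) (m : nat) : Prod d -> Prop :=
  gen (fun y => exists j : int, (absz j <= m)%N /\
        y = pmul (pmul (zpow (alpha d) j) (beta d r)) (zpow (alpha d) (- j)%R)).

From Stdlib Require Import Reals Lra.
From HB Require Import structures.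
From mathcomp Require Import all_boot all_order all_algebra all_fingroup all_solvable.
From mathcomp Require Import zify.
Set Implicit Arguments. Unset Strict Implicit. Unset Printing Implicit Defensive.

(* Since Alt(d) = <alpha_n, beta_n> is simple and beta_n <> 1, the subgroup
   generated by the conjugates beta_n ^ (alpha_n ^ j) is normalised by both
   generators, hence normal and nontrivial, hence all of Alt(d).  These
   conjugates only need exponents j below the order of alpha_n, which is at
   most d <= m, and each of them is the n-th coordinate of a generator of L_m. *)

Section Log2Bound.
Local Open Scope R_scope.

Lemma le_of_mul_log2_le (k m : nat) : (2 <= k)%N ->
  INR k * ln (INR k) / ln (INR 2) <= INR m -> (k <= m)%N.
Proof.
move=> k_ge2 hm; apply/leP/INR_le.
have ln2_gt0 : 0 < ln (INR 2) by rewrite -ln_1; apply: ln_increasing; simpl; lra.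
have ln2_le : ln (INR 2) <= ln (INR k).
  move: k_ge2; rewrite leq_eqVlt => /predU1P [<-|k_gt2]; first exact: Rle_refl.
  by apply/Rlt_le/ln_increasing; [simpl; lra | apply/lt_INR/ltP].
apply: Rle_trans hm; apply: (Rmult_le_reg_r (ln (INR 2))) => //.
have -> : INR k * ln (INR k) / ln (INR 2) * ln (INR 2) = INR k * ln (INR k).
  by field; lra.
by apply: Rmult_le_compat_l => //; apply: pos_INR.
Qed.

End Log2Bound.

Section GeneratingConjugates.
Local Open Scope group_scope.
Variable gT : finGroupType.

Lemma gen_class_cycle_simple (a b : gT) :
  simple <<[set a; b]>> -> b != 1 -> <<b ^: <[a]> >> = <<[set a; b]>>.
Proof.
move=> /simpleP [_ simpleG] b_neq1.
have aG : a \in <<[set a; b]>> by rewrite mem_gen // !inE eqxx.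
have bG : b \in <<[set a; b]>> by rewrite mem_gen // !inE eqxx orbT.
have bK : b \in <<b ^: <[a]> >> by rewrite mem_gen // class_refl.
have sKG : <<b ^: <[a]> >> \subset <<[set a; b]>>.
  by rewrite gen_subG class_subG // cycle_subG.
have nKG : <<b ^: <[a]> >>%G <| <<[set a; b]>>.
  rewrite /normal sKG gen_subG subUset !sub1set /=; apply/andP; split.
  - exact: (subsetP (norms_gen (class_norm b <[a]>))) _ (cycle_id a).
  - exact: (subsetP (normG _)).
case: (simpleG _ nKG) => // K1.
by move: bK; rewrite K1 inE (negbTE b_neq1).
Qed.

End GeneratingConjugates.

Lemma alpha_perm_expE k j (i : 'I_k) : val ((alpha_perm k ^+ j)%g i) = (i + j) %% k.
Proof.
elim: j => [|j IH]; first by rewrite expg0 perm1 addn0 modn_small.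
rewrite expgSr permM permE /= IH.
case: k i IH => [[]//|k] i _ /=.
by rewrite addnS -!addn1 modnDml addn1.
Qed.

Lemma order_alpha_perm_le k : (0 < k)%N -> (#[alpha_perm k]%g <= k)%N.
Proof.
case: k => // k _; apply/order_inf/eqP/permP => i; apply: val_inj.
by rewrite alpha_perm_expE perm1 modnDr modn_small.
Qed.

Lemma beta_perm_neq1 k r : (0 < r)%N -> (2 * r < k)%N -> beta_perm k r != 1%g.
Proof.
move=> r_gt0 k_gt2r; have k_gt0 : (0 < k)%N by lia.
apply/eqP => /permP /(_ (Ordinal k_gt0)) /(congr1 val).
rewrite perm1 permE /beta_fun r_gt0 k_gt2r val_insubd /cyc3 /=.
have -> : (r < k)%N by lia.
lia.
Qed.

Section ProductGroup.
Variable d : nat -> nat.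

Lemma gen_is_subgroup (S : Prod d -> Prop) : is_subgroup (gen S).
Proof.
split=> [H [] //|x y Sx Sy H subH SH|x Sx H subH SH].
- by case: (subH) => _ mulH _; apply: mulH; [apply: Sx | apply: Sy].
- by case: (subH) => _ _ invH; apply: invH; apply: Sx.
Qed.

Lemma pexpnE (x : Prod d) k n : pexpn x k n = (x n ^+ k)%g.
Proof. by elim: k => //= k IH; rewrite /pmul IH expgS. Qed.

Lemma zpow_posE (x : Prod d) j n : zpow x (Posz j) n = (x n ^+ j)%g.
Proof. exact: pexpnE. Qed.

Lemma zpow_negE (x : Prod d) j n : zpow x (- Posz j)%R n = (x n ^+ j)^-1%g.
Proof.
case: j => [|j]; first by rewrite GRing.oppr0 /= expg0 invg1.
by rewrite -NegzE /= /pinv /pmul pexpnE expgS.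
Qed.

Lemma zpow_mem (x : Prod d) j n (G : {group {perm 'I_(d n)}}) :
  x n \in G -> zpow x j n \in G.
Proof. by case: j => j xG; rewrite /= ?/pinv ?/pmul pexpnE ?groupV ?groupM ?groupX. Qed.

Lemma gen_proj_subG (S : Prod d -> Prop) n (G : {group {perm 'I_(d n)}}) :
  (forall y, S y -> y n \in G) -> forall x, gen S x -> x n \in G.
Proof.
move=> SG x /(_ (fun y => y n \in G)); apply; last exact: SG.
by split=> [|u v|u]; rewrite /pone /pmul /pinv ?group1 ?groupV //; apply: groupM.
Qed.

Lemma subgroup_proj_prod (H : Prod d -> Prop) n N (c : 'I_N -> {perm 'I_(d n)}) :
  is_subgroup H -> (forall i, exists x, H x /\ x n = c i) ->
  exists x, H x /\ x n = (\prod_i c i)%g.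
Proof.
move=> [H1 mulH _]; elim: N c => [|N IH] c liftc.
  by exists (pone d); rewrite big_ord0.
have [x [Hx xn]] := liftc ord0.
have [y [Hy yn]] := IH _ (fun i => liftc (lift ord0 i)).
by exists (pmul x y); rewrite big_ord_recl /pmul xn yn; split; first exact: mulH.
Qed.

End ProductGroup.

Lemma Lm_proj_conj_alpha (d r : nat -> nat) m n j : (j <= m)%N ->
  exists x, @Lm d r m x /\ x n = (beta d r n ^ (alpha d n ^+ j))%g.
Proof.
move=> le_jm.
exists (pmul (pmul (zpow (alpha d) (- Posz j)%R) (beta d r)) (zpow (alpha d) (- (- Posz j))%R)).
split; first by move=> H _ genH; apply: genH; exists (- Posz j)%R; rewrite abszN.
by rewrite /pmul GRing.opprK zpow_negE zpow_posE /conjg mulgA.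
Qed.

Theorem lemma3p3 (d r : nat -> nat)
  (d_mono : forall a b, (a <= b)%N -> (d a <= d b)%N)
  (d_odd : forall n, odd (d n))
  (d_ge5 : forall n, (5 <= d n)%N)
  (r_pos : forall n, (0 < r n)%N)
  (d_ge_r : forall n, (2 * r n + 1 <= d n)%N)
  (n : nat)
  (hgen : <<[set alpha d n; beta d r n]>>%g = Alt 'I_(d n))
  (m : nat)
  (hm : Rle (Rdiv (Rmult (INR (d n)) (ln (INR (d n)))) (ln (INR 2))) (INR m)) :
  forall y : {perm 'I_(d n)},
    y \in Alt 'I_(d n) <-> exists x : Prod d, @Lm d r m x /\ x n = y.
Proof.
have d_gt4 := d_ge5 n.
have le_dm : (d n <= m)%N by apply: le_of_mul_log2_le hm; lia.
have simpleG : simple <<[set alpha d n; beta d r n]>>%g.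
  by rewrite hgen simple_Alt5 // card_ord.
have beta_neq1 : beta d r n != 1%g.
  by apply: beta_perm_neq1 (r_pos n) _; have := d_ge_r n; lia.
move=> y; split => [|[x [Lx <-]]].
- rewrite -hgen -(gen_class_cycle_simple simpleG beta_neq1).
  case/gen_prodgP => N [c c_conj ->]; apply: subgroup_proj_prod => [|i].
    exact: gen_is_subgroup.
  have /imsetP [_ /cycleP [j ->] ->] := c_conj i.
  rewrite -expg_mod_order; apply: Lm_proj_conj_alpha; apply: leq_trans le_dm.
  apply: leq_trans (order_alpha_perm_le _); last by lia.
  exact/ltnW/ltn_pmod/order_gt0.
- rewrite -hgen; apply: gen_proj_subG Lx => _ [j [_ ->]].
  by rewrite !groupM ?zpow_mem // mem_gen // !inE eqxx ?orbT.
Qed.
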